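(* Let $G=(V,E)$ be a finite simple strongly connected directed graph with a fixed total order on $V$, let $W\subseteq V$ be strongly connected, $w\in W$, and let $\mathbf b$ be a spanning tree of $G$ rooted at $w$ with $\psi(\mathbf b)=W$. Let $\mathbf f$ be the set of edges of $\mathbf b$ whose source is not in $W$, and let $\mathfrak E$ be the set of vertices erased when running the exploration algorithm on $\mathbf b$. For each $u\in\mathfrak E$, let $e(u)$ be the edge (with source $u$, not in $\mathbf b$) whose processing caused $u$ to be erased. For $\mathfrak F\subseteq\mathfrak E$, let $\mathbf f_{\mathfrak F}$ be obtained from $\mathbf f$ by replacing, for each $u\in\mathfrak F$, the edge of $\mathbf f$ going out of $u$ by $e(u)$. Then for every $\mathfrak F\subseteq\mathfrak E$, $\mathbf f_{\mathfrak F}$ is a forest rooted in $W$.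
   Context: A spanning tree of $G$ is a subgraph on all vertices with no cycle, one vertex (root) of outdegree $0$ and all others of outdegree $1$. For nonempty $U\subseteq V$, a forest rooted in $U$ is a subgraph on all vertices with no cycle in which vertices of $U$ have outdegree $0$ and all others outdegree $1$. Exploration algorithm (depends on the fixed total order of $V$). Input: a spanning tree $\mathbf a$ rooted at $v$. Initialize $A=\{v\}$, $F=\{e: s(e)\neq v\}$, $\mathbf L$ = FIFO list of edges with target $v$, by increasing source. While $\mathbf L$ is nonempty, take its first edge $e$, with source $w'$: if $e\in\mathbf a$, add $w'$ to $A$, delete from $\mathbf L$ (and $F$) all edges with source $w'$, and append to $\mathbf L$ all edges of $F$ with target $w'$ by increasing source; otherwise delete from $\mathbf L$ and $F$ all edges with source or target $w'$, and $w'$ is said to be erased (by the edge $e$). At the end $\phi(\mathbf a)=A$ and $\psi(\mathbf a)$ is the strongly connected component of $v$ in the induced graph $G_{\phi(\mathbf a)}$. *)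

From mathcomp Require Import all_boot.
Set Implicit Arguments. Unset Strict Implicit. Unset Printing Implicit Defensive.

Section Defs.
Variable V : finType.

(* A directed graph is given by an edge relation G : rel V; an edge is a pair
   (source, target). A subgraph on all vertices is a set of edges. *)
Definition edges (G : rel V) : {set V * V} := [set e | G e.1 e.2].

Definition outdeg (a : {set V * V}) (x : V) : nat := #|[set e in a | e.1 == x]|.

Definition acyclic (a : {set V * V}) : Prop :=
  ~ exists (x : V) (p : seq V),
      [/\ p != [::], path (fun y z => (y, z) \in a) x p & last x p = x].

Definition spanning_tree (G : rel V) (a : {set V * V}) (v : V) : Prop :=
  [/\ a \subset edges G, outdeg a v = 0,
      (forall x, x != v -> outdeg a x = 1) & acyclic a].

Definition forest_rooted (G : rel V) (a : {set V * V}) (U : {set V}) : Prop :=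
  [/\ U != set0, a \subset edges G,
      (forall x, x \in U -> outdeg a x = 0),
      (forall x, x \notin U -> outdeg a x = 1) & acyclic a].

Definition induced (G : rel V) (U : {set V}) : rel V :=
  fun x y => [&& G x y, x \in U & y \in U].

Definition strongly_connected (G : rel V) : Prop := forall x y, connect G x y.

Definition strongly_connected_set (G : rel V) (U : {set V}) : Prop :=
  forall x y, x \in U -> y \in U -> connect (induced G U) x y.

Record xstate := XState {
  xA : {set V};                      (* accepted vertices *)
  xF : {set V * V};                  (* remaining edges *)
  xL : seq (V * V);                  (* FIFO list *)
  xErased : seq (V * (V * V))        (* erased vertices with the erasing edge *)
}.

Definition in_edges_sorted (r : rel V) (F : {set V * V}) (w : V) : seq (V * V) :=
  [seq (x, w) | x <- sort r [seq x <- enum V | (x, w) \in F]].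

Definition xstep (r : rel V) (a : {set V * V}) (st : xstate) : xstate :=
  match xL st with
  | [::] => st
  | e :: L' =>
    let w' := e.1 in
    if e \in a then
      let F' := [set f in xF st | f.1 != w'] in
      XState (w' |: xA st) F'
             ([seq f <- L' | f.1 != w'] ++ in_edges_sorted r F' w')
             (xErased st)
    else
      let F' := [set f in xF st | (f.1 != w') && (f.2 != w')] in
      XState (xA st) F'
             [seq f <- L' | (f.1 != w') && (f.2 != w')]
             (rcons (xErased st) (w', e))
  end.

Definition xinit (G : rel V) (r : rel V) (v : V) : xstate :=
  let F := [set e in edges G | e.1 != v] in
  XState [set v] F (in_edges_sorted r F v) [::].

(* Each non-trivial step removes the head edge of L from F (and L is always
   contained in F), so #|V|^2 + 1 iterations reach the terminal state; further
   iterations are the identity. *)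
Definition explore (G : rel V) (r : rel V) (a : {set V * V}) (v : V) : xstate :=
  iter (#|V| * #|V|).+1 (xstep r a) (xinit G r v).

Definition phi (G : rel V) (r : rel V) (a : {set V * V}) (v : V) : {set V} :=
  xA (explore G r a v).

Definition psi (G : rel V) (r : rel V) (a : {set V * V}) (v : V) : {set V} :=
  let A := phi G r a v in
  [set u in A | connect (induced G A) v u && connect (induced G A) u v].

Definition erased (G : rel V) (r : rel V) (a : {set V * V}) (v : V) : {set V} :=
  [set u in map fst (xErased (explore G r a v))].

Definition erasing_edge (G : rel V) (r : rel V) (a : {set V * V}) (v : V) (u : V)
  : V * V :=
  let s := xErased (explore G r a v) in
  nth (u, u) (map snd s) (index u (map fst s)).

End Defs.

From mathcomp Require Import all_boot.
Set Implicit Arguments. Unset Strict Implicit. Unset Printing Implicit Defensive.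

(* The exploration only ever accepts a vertex through a tree edge leaving it, so
   the accepted set A = phi(b) is closed under the tree edges, contains psi(b) = W,
   and every erased vertex u lies outside A while e(u) points into A.  In the
   switched graph an edge leaving A, or ending outside A, is therefore a tree
   edge; a cycle either stays in A or never enters it, and in both cases it is a
   cycle of the tree. *)

Section Graphs.
Variable V : finType.

Lemma acyclic_switch (a b : {set V * V}) (A : {set V}) :
    (forall x y, x \in A -> (x, y) \in b -> y \in A) ->
    (forall e, e \in a -> (e.1 \in A) || (e.2 \notin A) -> e \in b) ->
    acyclic b -> acyclic a.
Proof.
move=> Acl ab bac [x [p [pn pa px]]]; apply: bac; exists x, p; split => //.
have a_stays_in_A y z : (y, z) \in a -> y \in A -> z \in A.
  by move=> yz yA; apply: (Acl y) => //; apply: ab; rewrite ?yA.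
have path_from_A y q : y \in A -> path (fun s t => (s, t) \in a) y q ->
    path (fun s t => (s, t) \in b) y q && (last y q \in A).
  elim: q y => [|z q IH] y yA /=; first by rewrite yA.
  case/andP=> yz qa; rewrite (ab (y, z)) ?yA //=.
  exact: IH (a_stays_in_A _ _ yz yA) qa.
have [xA|xA] := boolP (x \in A); first by case/andP: (path_from_A _ _ xA pa).
have outA : all (fun z => z \notin A) p.
  apply/allP => z zp; apply/negP => zA; move: pa px.
  case/splitPr: zp => p1 p2; rewrite cat_path last_cat /= => /and3P [_ _ p2a].
  by case/andP: (path_from_A _ _ zA p2a) => _ + lx; rewrite lx (negbTE xA).
elim: p x pa outA {pn px xA} => [//|z q IH] y /= /andP [yz qa] /andP [zA qA].
by rewrite (ab (y, z)) ?zA ?orbT //=; apply: IH.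
Qed.

Variables (G : rel V) (b : {set V * V}) (w : V).
Hypothesis b_tree : spanning_tree G b w.

Lemma spanning_tree_out_uniq e1 e2 :
  e1 \in b -> e2 \in b -> e1.1 = e2.1 -> e1 = e2.
Proof.
case: b_tree => _ h0 h1 _ e1b e2b E.
have [xw|xw] := eqVneq e1.1 w.
  move: h0; rewrite /outdeg => /eqP; rewrite cards_eq0 => /eqP/setP/(_ e1).
  by rewrite !inE e1b xw eqxx.
move: (h1 _ xw); rewrite /outdeg => /eqP/cards1P [e0 /setP H].
by move: (H e1) (H e2); rewrite !inE e1b e2b E eqxx /= => /esym/eqP -> /esym/eqP ->.
Qed.

Lemma spanning_tree_root_out y : (w, y) \notin b.
Proof.
case: b_tree => _ /eqP; rewrite /outdeg cards_eq0 => /eqP/setP/(_ (w, y)).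
by rewrite !inE eqxx andbT => ->.
Qed.

End Graphs.

Section Exploration.
Variables (V : finType) (G r : rel V) (b : {set V * V}) (w : V).
Hypothesis b_tree : spanning_tree G b w.

Lemma in_edges_sortedP F x f :
  f \in in_edges_sorted r F x -> f \in F /\ f.2 = x.
Proof. by case/mapP => y; rewrite mem_sort mem_filter => /andP [yin _] ->. Qed.

Record explore_inv (st : xstate V) : Prop := ExploreInv {
  inv_LF : forall e, e \in xL st -> e \in xF st;
  inv_FG : forall e, e \in xF st -> G e.1 e.2;
  inv_LA : forall e, e \in xL st -> e.2 \in xA st;
  inv_FA : forall e, e \in xF st -> e.1 \notin xA st;
  inv_Acl : forall x y, x \in xA st -> (x, y) \in b -> y \in xA st;
  inv_erased : forall u e, (u, e) \in xErased st ->
     [/\ e.1 = u, G e.1 e.2, e.2 \in xA st, u \notin xA st &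
         forall f, f \in xF st -> f.1 != u]
}.

Lemma explore_inv_init : explore_inv (xinit G r w).
Proof.
split => //=.
- by move=> e /in_edges_sortedP [].
- by move=> e; rewrite !inE => /andP [].
- by move=> e /in_edges_sortedP [_ ->]; rewrite inE.
- by move=> e; rewrite !inE => /andP [].
- by move=> x y; rewrite inE => /eqP ->; rewrite (negbTE (spanning_tree_root_out b_tree y)).
Qed.

Lemma explore_inv_step st : explore_inv st -> explore_inv (xstep r b st).
Proof.
case: st => A F L Er [/= LF FG LA FA Acl ErP].
rewrite /xstep /=; case: L LF LA => [|e L'] LF LA; first by split.
have eF : e \in F by apply: LF; rewrite inE eqxx.
have eA : e.2 \in A by apply: LA; rewrite inE eqxx.
case: ifP => eb; split => /=.
- move=> f; rewrite mem_cat mem_filter => /orP [/andP [fne fL]|/in_edges_sortedP [] //].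
  by rewrite inE fne LF // inE fL orbT.
- by move=> f; rewrite inE => /andP [/FG].
- move=> f; rewrite mem_cat mem_filter => /orP [/andP [fne fL]|/in_edges_sortedP [_ ->]].
    by rewrite !inE LA ?orbT // inE fL orbT.
  by rewrite !inE eqxx.
- by move=> f; rewrite !inE => /andP [/FA fA fne]; rewrite negb_or fne fA.
- move=> x y; rewrite !inE => /orP [/eqP ->|xA] xyb; last by rewrite (Acl x) ?orbT.
  by rewrite [y](_ : _ = e.2) ?eA ?orbT // -(spanning_tree_out_uniq b_tree xyb eb).
- move=> u e0 /ErP [h1 h2 h3 h4 h5]; split => //.
  + by rewrite !inE h3 orbT.
  + by rewrite !inE negb_or h4 andbT eq_sym h5.
  + by move=> f; rewrite inE => /andP [/h5].
- move=> f; rewrite mem_filter => /andP [fne fL].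
  by rewrite inE fne LF // inE fL orbT.
- by move=> f; rewrite inE => /andP [/FG].
- by move=> f; rewrite mem_filter => /andP [_ fL]; rewrite LA // inE fL orbT.
- by move=> f; rewrite !inE => /andP [/FA].
- exact: Acl.
- move=> u e0; rewrite mem_rcons inE => /orP [/eqP [-> ->]|/ErP [h1 h2 h3 h4 h5]].
    split; [by [] | exact: FG | by [] | exact: FA |].
    by move=> f; rewrite inE => /andP [_ /andP []].
  by split => // f; rewrite inE => /andP [/h5].
Qed.

Lemma explore_invP : explore_inv (explore G r b w).
Proof.
rewrite /explore; elim: _.+1 => [|n IH] /=; first exact: explore_inv_init.
exact: explore_inv_step.
Qed.

Lemma phi_tree_closed x y : x \in phi G r b w -> (x, y) \in b -> y \in phi G r b w.
Proof. exact: inv_Acl explore_invP x y. Qed.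

Lemma psi_sub_phi : psi G r b w \subset phi G r b w.
Proof. by apply/subsetP => x; rewrite inE => /andP []. Qed.

Lemma erasing_edgeP u : u \in erased G r b w ->
  let e := erasing_edge G r b w u in
  [/\ e.1 = u, G e.1 e.2, e.2 \in phi G r b w & u \notin phi G r b w].
Proof.
rewrite /erased /erasing_edge /phi inE; set Er := xErased _ => uin /=.
have ilt : index u (map fst Er) < size Er by rewrite -(size_map fst) index_mem.
suff /(inv_erased explore_invP) [] : (u, nth (u, u) (map snd Er) (index u (map fst Er))) \in Er
  by [].
rewrite (nth_map (u, (u, u))) // -{1}(nth_index u uin) (nth_map (u, (u, u))) //.
by case: nth (mem_nth (u, (u, u)) ilt).
Qed.

End Exploration.

Section Switch.
Variables (V : finType) (G : rel V) (b : {set V * V}) (w : V).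
Variables (W A Fr : {set V}) (E : V -> V * V).
Hypothesis b_tree : spanning_tree G b w.
Hypothesis wW : w \in W.
Hypothesis WA : W \subset A.
Hypothesis A_tree_closed : forall x y, x \in A -> (x, y) \in b -> y \in A.
Hypothesis EP : forall u, u \in Fr ->
  [/\ (E u).1 = u, G (E u).1 (E u).2, (E u).2 \in A & u \notin A].

Definition switch_edges : {set V * V} :=
  [set e in [set e in b | e.1 \notin W] | e.1 \notin Fr] :|: [set E u | u in Fr].

Lemma switch_edgeP e : e \in switch_edges ->
  e.1 \notin W /\ (if e.1 \in Fr then e = E e.1 else e \in b).
Proof.
rewrite !inE => /orP [/andP [/andP [eb eW] eF]|/imsetP [u uF ->]].
  by rewrite (negbTE eF).
have [-> _ _ uA] := EP uF; rewrite uF; split => //.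
by apply: contra uA; apply: (subsetP WA).
Qed.

Lemma switch_edge_tree e :
  e \in switch_edges -> (e.1 \in A) || (e.2 \notin A) -> e \in b.
Proof.
case/switch_edgeP => _; case: ifP => // eF ->.
by have [-> _ -> /negbTE ->] := EP eF.
Qed.

Lemma switch_out x :
  [set e in switch_edges | e.1 == x] =
  if x \in W then set0
  else if x \in Fr then [set E x] else [set e in b | e.1 == x].
Proof.
apply/setP => e; rewrite [e \in [set _ in _ | _]]inE.
apply/andP/idP => [[eS /eqP ex]|]; first subst x.
  have [eW] := switch_edgeP eS; rewrite (negbTE eW).
  by case: ifP => _ h; rewrite inE; [apply/eqP | rewrite h eqxx].
case: ifP => xW; first by rewrite inE.
case: ifP => xF.
  by rewrite inE => /eqP ->; have [-> _ _ _] := EP xF; rewrite inE imset_f ?orbT.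
by rewrite !inE => /andP [eb /eqP ex]; rewrite ex xW xF eb eqxx.
Qed.

Lemma switch_forest_rooted : forest_rooted G switch_edges W.
Proof.
have [bG _ bout bac] := b_tree.
split.
- by apply/set0Pn; exists w.
- apply/subsetP => e eS; have [_] := switch_edgeP eS; case: ifP => [eF ->|_ eb].
    by have [_ ? _ _] := EP eF; rewrite inE.
  exact: (subsetP bG).
- by move=> x xW; rewrite /outdeg switch_out xW cards0.
- move=> x xW; rewrite /outdeg switch_out (negbTE xW).
  case: ifP => _; first exact: cards1.
  by apply: bout; apply: contraNneq xW => ->.
- exact: acyclic_switch A_tree_closed switch_edge_tree bac.
Qed.

End Switch.

Theorem lemma4p4 (V : finType) (G : rel V) (r : rel V)
    (G_irr : irreflexive G) (G_sc : strongly_connected G)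
    (r_total : total r) (r_trans : transitive r) (r_anti : antisymmetric r)
    (W : {set V}) (W_sc : strongly_connected_set G W)
    (w : V) (wW : w \in W)
    (b : {set V * V}) (b_tree : spanning_tree G b w)
    (b_psi : psi G r b w = W) :
  let f := [set e in b | e.1 \notin W] in
  forall Fr : {set V}, Fr \subset erased G r b w ->
    forest_rooted G
      ([set e in f | e.1 \notin Fr] :|: [set erasing_edge G r b w u | u in Fr])
      W.
Proof.
move=> f Fr FrE.
apply: (switch_forest_rooted b_tree wW (A := phi G r b w)).
- by rewrite -b_psi; apply: psi_sub_phi.
- exact: phi_tree_closed.
- by move=> u /(subsetP FrE); apply: erasing_edgeP.
Qed.
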